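(* Let $V$ be a finite set of numeric variables, let $t$ be a linear term over $V$, and let $a \in \mathbb{R} \cup \{-\infty\}$, $b \in \mathbb{R} \cup \{\infty\}$ with $a \leq b$. Let $t' := t[V \mapsto V']$ and $\epsilon > 0$. Define $\mathit{base} := (a \leq t \leq b)$, $\mathit{conc} := \top$, $\mathit{stay} := (a \leq t' \leq b) \lor (t < a \land t \leq t' \leq b) \lor (t > b \land t \geq t' \geq a)$, and $\mathit{step} := (a \leq t' \leq b) \lor (t < a \land t + \epsilon \leq t' \leq b) \lor (t > b \land t - \epsilon \geq t' \geq a)$. Then $(\mathit{base}, \mathit{stay}, \mathit{step}, \mathit{conc})$ is a GAL over $V$.
   Context: The theory $T$ is linear arithmetic. For a set of variables $X$, $\mathcal{A}(X)$ denotes the set of assignments to $X$. $X' = \{x' \mid x \in X\}$ is a disjoint primed copy of $X$; for $\nu \in \mathcal{A}(X)$, $\nu' \in \mathcal{A}(X')$ is given by $\nu'(x') = \nu(x)$; for $\nu_1,\nu_2 \in \mathcal{A}(X)$, $\langle \nu_1,\nu_2\rangle := \nu_1 \uplus \nu_2'$. $\nu \models_T \alpha$ denotes entailment in $T$. $t[V\mapsto V']$ replaces each $v\in V$ by $v'$. A generalized acceleration lemma (GAL) over $V$ is a tuple $(\mathit{base}, \mathit{stay}, \mathit{step}, \mathit{conc})$ of first-order formulas with $\mathit{base}, \mathit{conc}$ having free variables in $V$ and $\mathit{stay}, \mathit{step}$ having free variables in $V \cup V'$, such that: (I) for every sequence $\alpha \in \mathcal{A}(V)^\omega$ with $\alpha[0]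 \models_T \mathit{conc}$, if (a) for all $i$, $\langle\alpha[i],\alpha[i+1]\rangle \models_T \mathit{step} \lor \mathit{stay}$, and (b) for all $i$ there is $j \ge i$ with $\langle\alpha[j],\alpha[j+1]\rangle \models_T \mathit{step}$, then there is $k$ with $\alpha[k] \models_T \mathit{base}$; and (II) for all $\nu,\nu' \in \mathcal{A}(V)$ with $\nu \models_T \mathit{conc}$ and $\langle \nu,\nu'\rangle \models_T \mathit{step}\lor\mathit{stay}$, we have $\nu' \models_T \mathit{conc}$. Comparisons with $\pm\infty$ are interpreted in the extended reals (e.g. $-\infty \le t$ is always true). *)

From HB Require Import structures.
From mathcomp Require Import all_boot all_order all_algebra.
From mathcomp Require Import reals constructive_ereal.
Set Implicit Arguments. Unset Strict Implicit. Unset Printing Implicit Defensive.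
Import Order.TTheory GRing.Theory Num.Theory.
Local Open Scope ring_scope.

Definition assign (R : realType) (V : finType) := V -> R.

Record lin_term (R : realType) (V : finType) := LinTerm {
  lt_const : R;
  lt_coef : V -> R }.

Definition eval_term (R : realType) (V : finType) (t : lin_term R V)
  (nu : assign R V) : R :=
  lt_const t + \sum_(v : V) lt_coef t v * nu v.

(* Formulas are represented semantically:
   formulas over V are predicates on assignments of V;
   formulas over V u V' are predicates on the pair <nu1, nu2>
   (nu1 assigns V, nu2 assigns the primed copy V').
   Hence the primed term t' = t[V -> V'] evaluates on <nu1,nu2> to
   eval_term t nu2. *)
Definition formV (R : realType) (V : finType) := assign R V -> Prop.
Definition formVV (R : realType) (V : finType) := assign R V -> assign R V -> Prop.

Definition is_GAL (R : realType) (V : finType)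
  (base : formV R V) (stay step : formVV R V) (conc : formV R V) : Prop :=
  (forall alpha : nat -> assign R V,
      conc (alpha 0%N) ->
      (forall i : nat, step (alpha i) (alpha i.+1) \/ stay (alpha i) (alpha i.+1)) ->
      (forall i : nat, exists j : nat, (i <= j)%N /\ step (alpha j) (alpha j.+1)) ->
      exists k : nat, base (alpha k))
  /\
  (forall nu nu' : assign R V,
      conc nu -> (step nu nu' \/ stay nu nu') -> conc nu').

Local Open Scope ereal_scope.

Definition base5 (R : realType) (V : finType) (t : lin_term R V)
  (a b : \bar R) : formV R V :=
  fun nu => a <= (eval_term t nu)%:E /\ (eval_term t nu)%:E <= b.

Definition conc5 (R : realType) (V : finType) : formV R V := fun _ => True.

Definition stay5 (R : realType) (V : finType) (t : lin_term R V)
  (a b : \bar R) : formVV R V :=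
  fun nu nu' =>
    let x := eval_term t nu in let y := eval_term t nu' in
    (a <= y%:E /\ y%:E <= b)
    \/ (x%:E < a /\ (x <= y)%R /\ y%:E <= b)
    \/ (b < x%:E /\ (y <= x)%R /\ a <= y%:E).

Definition step5 (R : realType) (V : finType) (t : lin_term R V)
  (a b : \bar R) (eps : R) : formVV R V :=
  fun nu nu' =>
    let x := eval_term t nu in let y := eval_term t nu' in
    (a <= y%:E /\ y%:E <= b)
    \/ (x%:E < a /\ (x + eps <= y)%R /\ y%:E <= b)
    \/ (b < x%:E /\ (y <= x - eps)%R /\ a <= y%:E).

(* Only the value x_i of t along the run matters.  Once x_i lies outside
   [a, b], say below a, every transition that does not enter [a, b] keeps
   x_i below a and never decreases it, while each of the infinitely many
   step transitions increases it by at least eps.  So x_i eventually exceeds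
   any real bound, in particular the finite bound a, a contradiction.  The
   case above b is the mirror image under negation. *)

From HB Require Import structures.
From mathcomp Require Import all_boot all_order all_algebra.
From mathcomp Require Import reals constructive_ereal.
From mathcomp Require Import lra.
From Stdlib Require Import Classical.
Import Order.TTheory GRing.Theory Num.Theory.
Local Open Scope ring_scope.

Section GuardedMoves.
Context {R : realType}.
Implicit Types (a b : \bar R) (d eps c x y : R) (u : nat -> R).

Lemma nondecreasing_jumps_unbounded {eps u} c : 0 < eps ->
  (forall i, u i <= u i.+1) ->
  (forall i, exists j, (i <= j)%N /\ u j + eps <= u j.+1) ->
  exists n, c <= u n.
Proof.
move=> eps_gt0 u_nondecr jumps.
have u_homo := homo_leq (@lexx _ R) le_trans u_nondecr.
have growth n : exists j, u 0%N + n%:R * eps <= u j.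
  elim: n => [|n [j uj]]; first by exists 0%N; rewrite mul0r addr0.
  have [k [jk uk]] := jumps j; exists k.+1.
  have := u_homo _ _ jk; rewrite -natr1 mulrDl mul1r; lra.
pose m := Num.bound (`|c - u 0%N| / eps).
have [j uj] := growth m; exists j.
have := archi_boundP (divr_ge0 (normr_ge0 (c - u 0%N)) (ltW eps_gt0)).
rewrite ltr_pdivrMr // -/m => bound_m.
have := ler_norm (c - u 0%N); lra.
Qed.

Definition in_range a b y : Prop := (a <= y%:E /\ y%:E <= b)%E.

(* On the values x, y of t before and after a transition, [stay] is
   [guarded_move a b 0] and [step] is [guarded_move a b eps]. *)
Definition guarded_move a b d x y : Prop :=
  in_range a b y
  \/ ((x%:E < a)%E /\ x + d <= y /\ (y%:E <= b)%E)
  \/ ((b < x%:E)%E /\ y <= x - d /\ (a <= y%:E)%E).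

Lemma not_in_range {a b y} :
  ~ in_range a b y -> (y%:E < a)%E \/ (b < y%:E)%E.
Proof.
move=> y_out; case: (leP a y%:E) => [ay|]; last by left.
by case: (leP y%:E b) => [yb|]; [case: y_out | right].
Qed.

Lemma in_rangeN a b y : in_range (- b)%E (- a)%E (- y) <-> in_range a b y.
Proof. by rewrite /in_range EFinN !leeN2; split=> -[]. Qed.

Lemma guarded_move_le {a b d d' x y} : d' <= d ->
  guarded_move a b d x y -> guarded_move a b d' x y.
Proof.
move=> dd' [y_in|[[xa [xy yb]]|[bx [yx ay]]]]; [left=> // | right; left | right; right].
  by split=> //; split=> //; lra.
by split=> //; split=> //; lra.
Qed.

Lemma guarded_moveN a b d x y :
  guarded_move a b d x y -> guarded_move (- b)%E (- a)%E d (- x) (- y).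
Proof.
rewrite /guarded_move in_rangeN !EFinN !leeN2 !lteN2.
move=> [y_in|[[xa [xy yb]]|[bx [yx ay]]]]; [left=> // | right; right | right; left].
  by split=> //; split=> //; lra.
by split=> //; split=> //; lra.
Qed.

Lemma guarded_move_below {a b d x y} : (a <= b)%E -> (x%:E < a)%E ->
  guarded_move a b d x y -> ~ in_range a b y -> x + d <= y /\ (y%:E < a)%E.
Proof.
move=> ab xa [y_in|[[_ [xy yb]]|[bx _]]] y_out; first by case: y_out.
  split=> //; case: (not_in_range y_out) => // /lt_le_trans/(_ yb).
  by rewrite ltxx.
by have := lt_trans bx (lt_le_trans xa ab); rewrite ltxx.
Qed.

Definition guarded_run a b eps (x : nat -> R) : Prop :=
  (forall i, guarded_move a b 0 (x i) (x i.+1))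
  /\ (forall i, exists j, (i <= j)%N /\ guarded_move a b eps (x j) (x j.+1)).

Lemma guarded_runN {a b eps} {x : nat -> R} :
  guarded_run a b eps x -> guarded_run (- b)%E (- a)%E eps (fun i => - x i).
Proof.
move=> [moves jumps]; split=> [i|i]; first exact: guarded_moveN.
by have [j [ij jump]] := jumps i; exists j; split=> //; apply: guarded_moveN.
Qed.

Lemma guarded_run_enters_from_below {a b eps} {x : nat -> R} :
  (a <= b)%E -> 0 < eps -> a != +oo%E -> ((x 0%N)%:E < a)%E ->
  guarded_run a b eps x -> exists k, in_range a b (x k).
Proof.
move=> ab eps_gt0 a_fin x0a [moves jumps]; apply: NNPP => never_in.
have x_out k : ~ in_range a b (x k) by move=> xk; apply: never_in; exists k.
have below i : ((x i)%:E < a)%E.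
  elim: i => // i xia.
  exact: (guarded_move_below ab xia (moves i) (x_out i.+1)).2.
have a_fin_num : a \is a fin_num.
  rewrite fin_numE a_fin andbT.
  by apply: contraTneq x0a => ->; rewrite ltNge leNye.
have x_nondecr i : x i <= x i.+1.
  have := (guarded_move_below ab (below i) (moves i) (x_out i.+1)).1.
  by rewrite addr0.
have x_jumps i : exists j, (i <= j)%N /\ x j + eps <= x j.+1.
  have [j [ij jump]] := jumps i; exists j; split=> //.
  exact: (guarded_move_below ab (below j) jump (x_out j.+1)).1.
have [n a_le_xn] :=
  nondecreasing_jumps_unbounded (fine a) eps_gt0 x_nondecr x_jumps.
by have := below n; rewrite -(fineK a_fin_num) lte_fin ltNge a_le_xn.
Qed.

Lemma guarded_run_enters {a b eps} {x : nat -> R} :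
  (a <= b)%E -> 0 < eps -> a != +oo%E -> b != -oo%E ->
  guarded_run a b eps x -> exists k, in_range a b (x k).
Proof.
move=> ab eps_gt0 a_fin b_fin run.
case: (classic (in_range a b (x 0%N))) => [x0_in|x0_out]; first by exists 0%N.
case: (not_in_range x0_out) => [x0a|bx0].
  exact: guarded_run_enters_from_below ab eps_gt0 a_fin x0a run.
have [|||k] := guarded_run_enters_from_below _ eps_gt0 _ _ (guarded_runN run).
- by rewrite leeN2.
- by rewrite eqe_oppLR.
- by rewrite EFinN lteN2.
by rewrite in_rangeN; exists k.
Qed.

End GuardedMoves.

Theorem lemma5 (R : realType) (V : finType) (t : lin_term R V)
  (a b : \bar R) (eps : R)
  (ha : a != +oo%E) (hb : b != -oo%E) (hab : (a <= b)%E) (heps : 0 < eps) :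
  is_GAL (base5 t a b) (stay5 t a b) (step5 t a b eps) (@conc5 R V).
Proof.
split=> // alpha _ moves jumps.
have stay_move nu nu' : stay5 t a b nu nu' ->
    guarded_move a b 0 (eval_term t nu) (eval_term t nu').
  by rewrite /guarded_move addr0 subr0.
apply: (@guarded_run_enters _ a b eps (fun i => eval_term t (alpha i)) hab heps ha hb).
split=> [i|i]; first case: (moves i) => [step|/stay_move //].
- exact: guarded_move_le (ltW heps) step.
- by have [j [ij step]] := jumps i; exists j.
Qed.
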